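(* Let $\psi^+$ be a rooted binary topological tree on $X$ and $\kappa\ge2$. For each internal vertex $v$ of $\psi^+$ fix two taxa $a,b$ with $v=\operatorname{MRCA}(a,b)$, and let $\mathcal S_v$ be the set of linear equations (in the entries of an indeterminate tensor $P$) expressing that every matrix slice of $P_{ab}$, obtained by fixing the indices of all taxa in $X\setminus\operatorname{desc}(v)$, is symmetric, where $P_{ab}$ denotes the marginalization of $P$ over all indices of taxa in $\operatorname{desc}(v)\setminus\{a,b\}$. For leaves $v$ set $\mathcal S_v=\emptyset$. Then the set $\mathcal S=\bigcup_{v}\mathcal S_v$ defines the linear space $L(\psi^+)$ (regardless of which pairs $a,b$ are chosen).
   Context: Consider real $|X|$-way $\kappa\times\cdots\times\kappa$ tensors $P$ with one index per taxon in $X$. For $Y\subseteq X$, $P_Y$ is the marginalization to $Y$; $\psi^+|_Y$ is the induced rooted subtree; a 2-clade is a pair of leaves that are exactly the leaf descendants of some vertex. $L(\psi^+)$ is the linear space of all real tensors $P$ such that for every $Y\subseteq X$ and every 2-clade $\{a,b\}$ of $\psi^+|_Y$, $P_Y$ is invariant under exchanging the $a$ and $b$ indices. $\operatorname{desc}(v)$ is the set of taxa (leaves) descended from $v$, and $\operatorname{MRCA}(a,b)$ is the most recent common ancestor of leaves $a,b$. *)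

From mathcomp Require Import all_boot all_order all_algebra.
Set Implicit Arguments. Unset Strict Implicit. Unset Printing Implicit Defensive.
Import GRing.Theory Num.Theory.
Local Open Scope ring_scope.

Inductive tree (X : Type) := Leaf of X | Node of tree X & tree X.
Arguments Leaf {X}. Arguments Node {X}.

Fixpoint leaves (X : Type) (t : tree X) : seq X :=
  match t with Leaf x => [:: x] | Node l r => leaves l ++ leaves r end.

Definition tree_on (X : finType) (t : tree X) : Prop :=
  uniq (leaves t) /\ forall x : X, x \in leaves t.

(* "p holds at every vertex" / "at some vertex" (vertices = subtrees) *)
Fixpoint allv (X : Type) (p : tree X -> Prop) (t : tree X) : Prop :=
  p t /\ match t with Leaf _ => True | Node l r => allv p l /\ allv p r end.
Fixpoint exv (X : Type) (p : tree X -> Prop) (t : tree X) : Prop :=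
  p t \/ match t with Leaf _ => False | Node l r => exv p l \/ exv p r end.

Definition is_internal (X : Type) (t : tree X) : bool :=
  if t is Node _ _ then true else false.

Definition desc (X : finType) (v : tree X) : {set X} := [set x in leaves v].

Definition is_mrca (X : finType) (v : tree X) (a b : X) : Prop :=
  a \in leaves v /\ b \in leaves v /\
  match v with
  | Leaf _ => True
  | Node l r => ~~ ((a \in leaves l) && (b \in leaves l)) /\
                ~~ ((a \in leaves r) && (b \in leaves r))
  end.

(* induced rooted subtree psi|_Y (degree-2 vertices suppressed);
   None when Y contains no leaf of t *)
Fixpoint restrict (X : finType) (Y : {set X}) (t : tree X) : option (tree X) :=
  match t with
  | Leaf x => if x \in Y then Some (Leaf x) else None
  | Node l r =>
      match restrict Y l, restrict Y r with
      | Some l', Some r' => Some (Node l' r')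
      | Some l', None => Some l'
      | None, Some r' => Some r'
      | None, None => None
      end
  end.

Definition two_clade (X : finType) (t : tree X) (Y : {set X}) (a b : X) : Prop :=
  a != b /\
  match restrict Y t with
  | Some t' => exv (fun w => perm_eq (leaves w) [:: a; b]) t'
  | None => False
  end.

Definition index (X : finType) (k : nat) := {ffun X -> 'I_k}.
Definition tensor (R : Type) (X : finType) (k : nat) := index X k -> R.

(* marginalization P_Y, viewed as a function of the full index (depends only
   on the coordinates in Y) *)
Definition marg (R : realFieldType) (X : finType) (k : nat)
  (P : tensor R X k) (Y : {set X}) (i : index X k) : R :=
  \sum_(j : index X k | [forall y in Y, j y == i y]) P j.

Definition swap_idx (X : finType) (k : nat) (i : index X k) (a b : X) : index X k :=
  [ffun x => if x == a then i b else if x == b then i a else i x].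

Definition sym_in (R : realFieldType) (X : finType) (k : nat)
  (P : tensor R X k) (Y : {set X}) (a b : X) : Prop :=
  forall i : index X k, marg P Y (swap_idx i a b) = marg P Y i.

Definition inL (R : realFieldType) (X : finType) (k : nat)
  (t : tree X) (P : tensor R X k) : Prop :=
  forall (Y : {set X}) (a b : X), two_clade t Y a b -> sym_in P Y a b.

(* the equations S_v for internal v with chosen pair (a,b): every matrix slice
   of P_ab (marginalize over desc(v)\{a,b}, fix indices outside desc(v)) is
   symmetric, i.e. P_{(X\desc v) u {a,b}} is invariant under a<->b *)
Definition S_v (R : realFieldType) (X : finType) (k : nat)
  (P : tensor R X k) (v : tree X) (a b : X) : Prop :=
  sym_in P (~: desc v :|: [set a; b]) a b.

From Pilot Require Import Defs.
From mathcomp Require Import all_boot all_order all_algebra.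
From mathcomp Require Import fingroup perm.
Local Open Scope ring_scope.

(* For a permutation s of the taxa, [moves P s Z] says that the
   marginal P_Z with its indices relabelled along s is the marginal P_{s(Z)}.
   This is stable under composition, depends only on s restricted to Z, and
   passes to subsets of Z, because marginalization can be done in stages.
   Symmetry of P_Z in (a,b) is [moves] for the transposition (a b), and
   [exch O x y] (x, y exchangeable relative to O) is [moves] for (x y) on
   O + x.  Exchangeability is transitive, and it transports a symmetry in
   (x,y) to a symmetry in (x',y) ([sym_transport]).

   Forward direction: if each internal vertex has a symmetric split pair
   ([split_sym]), then all leaves of a subtree w are exchangeable relative to
   any set disjoint from w ([exch_leaves]); for a 2-clade {a,b} of psi|_Y,
   split at a vertex w of psi, transporting the symmetry of w's chosen pair
   yields the symmetry of P_Y in (a,b) ([clade_sym]).  Backward direction: the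
   chosen pair {c,d} of v is a 2-clade of psi|_Y for Y = (X \ desc v) + {c,d}
   ([cherry_two_clade]), so S_v is one of the defining conditions of L. *)

Set Implicit Arguments. Unset Strict Implicit. Unset Printing Implicit Defensive.

Section Relabelling.
Variables (R : realFieldType) (X : finType) (k : nat) (P : tensor R X k).
Local Notation idx := (Defs.index X k).
Implicit Types (i j : idx) (s : {perm X}) (O W Z : {set X}) (a b x y : X).

Definition relabel i s : idx := [ffun u => i (s u)].

Lemma relabelM i s s' : relabel i (s * s')%g = relabel (relabel i s') s.
Proof. by apply/ffunP => u; rewrite !ffunE permM. Qed.

Lemma relabelK s : cancel (relabel^~ s) (relabel^~ s^-1%g).
Proof. by move=> i; apply/ffunP => u; rewrite !ffunE permKV. Qed.

Lemma swap_idx_tperm i a b : swap_idx i a b = relabel i (tperm a b).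
Proof.
apply/ffunP => u; rewrite !ffunE.
case: tpermP => [->|->|/eqP/negbTE-> /eqP/negbTE->] //; rewrite eqxx //.
by case: eqP => [->|].
Qed.

Lemma mem_tperm_imset a b Z u : (u \in tperm a b @: Z) = (tperm a b u \in Z).
Proof. by rewrite -{1}(tpermK a b u) mem_imset //; apply: perm_inj. Qed.

Lemma tperm_imset_id a b Z : a \in Z -> b \in Z -> tperm a b @: Z = Z.
Proof.
move=> aZ bZ; apply/setP => u; rewrite mem_tperm_imset.
by case: tpermP => [->|->|//]; rewrite ?aZ ?bZ.
Qed.

Lemma tperm_imsetU1 x y O : x \notin O -> y \notin O -> tperm x y @: (x |: O) = y |: O.
Proof.
move=> xO yO; apply/setP => u; rewrite mem_tperm_imset !inE.
case: tpermP => [->|->|/eqP/negbTE-> /eqP/negbTE->] //; last by rewrite !eqxx.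
by rewrite (negbTE yO) (negbTE xO) !orbF eq_sym.
Qed.

Lemma perm_imsetM s s' Z : (s * s')%g @: Z = s' @: (s @: Z).
Proof. by rewrite -imset_comp; apply: eq_imset => u; rewrite permM. Qed.

Lemma marg_ext Z i i' : {in Z, i =1 i'} -> marg P Z i = marg P Z i'.
Proof.
move=> eq_ii'; apply: eq_bigl => j /=.
by apply: eq_forallb => y; case: (boolP (y \in Z)) => //= /eq_ii' ->.
Qed.

Lemma marg_split W Z i : W \subset Z ->
  marg P W i = \sum_(j : idx | [forall y in W :|: ~: Z, j y == i y]) marg P Z j.
Proof.
move=> sWZ; rewrite /marg (exchange_big_dep predT) //= big_mkcond.
apply: eq_bigr => j _; case: ifP => agreeW.
  pose j0 : idx := [ffun y => if y \in Z then j y else i y].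
  rewrite (big_pred1 j0) // => j' /=; apply/idP/eqP => [|->].
    case/andP => /forallP agree' /forallP agreeZ; apply/ffunP => y; rewrite ffunE.
    case: ifP => yZ; first by have := agreeZ y; rewrite yZ => /eqP.
    by have := agree' y; rewrite !inE yZ orbT => /eqP.
  apply/andP; split; apply/forallP => y; apply/implyP; rewrite ?inE ffunE.
    case/orP => [yW|/negbTE-> //]; rewrite (subsetP sWZ _ yW).
    by move/forallP: agreeW => /(_ y); rewrite yW.
  by move=> ->.
rewrite big_pred0 // => j' /=; apply/negbTE/negP => /andP[/forallP agree' /forallP agreeZ].
move/negP: agreeW; apply; apply/forallP => y; apply/implyP => yW.
have := agree' y; rewrite inE yW => /eqP <-.
by have := agreeZ y; rewrite (subsetP sWZ _ yW).
Qed.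

Definition moves s Z := forall i, marg P Z (relabel i s) = marg P (s @: Z) i.

Lemma moves1 Z : moves 1 Z.
Proof.
move=> i; rewrite imset_perm1; congr marg.
by apply/ffunP => u; rewrite ffunE perm1.
Qed.

Lemma moves_comp s s' Z : moves s Z -> moves s' (s @: Z) -> moves (s * s')%g Z.
Proof. by move=> mvZ mvsZ i; rewrite relabelM mvZ mvsZ perm_imsetM. Qed.

Lemma moves_eq_in s s' Z : {in Z, s =1 s'} -> moves s Z -> moves s' Z.
Proof.
move=> eq_ss' mvZ i; rewrite -(eq_in_imset eq_ss') -mvZ.
by apply: marg_ext => u uZ; rewrite !ffunE eq_ss'.
Qed.

Lemma moves_sub s W Z : W \subset Z -> moves s Z -> moves s W.
Proof.
move=> sWZ mvZ i; rewrite (marg_split _ sWZ) (marg_split _ (imsetS s sWZ)).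
rewrite (reindex_inj (can_inj (relabelK s))); apply: eq_big => [j|j _]; last exact: mvZ.
have s_inj := @perm_inj _ s.
apply/forallP/forallP => agree u; apply/implyP.
  rewrite -[u](permKV s) !inE !(mem_imset _ _ s_inj).
  by move/implyP: (agree (s^-1%g u)); rewrite !inE !ffunE.
by move/implyP: (agree (s u)); rewrite !inE !(mem_imset _ _ s_inj) !ffunE.
Qed.

Lemma sym_inE Z a b : a \in Z -> b \in Z -> sym_in P Z a b <-> moves (tperm a b) Z.
Proof.
move=> aZ bZ; rewrite /sym_in /moves tperm_imset_id //.
by split=> sym i; [rewrite -swap_idx_tperm | rewrite swap_idx_tperm]; apply: sym.
Qed.

Lemma sym_inC Z a b : sym_in P Z a b -> sym_in P Z b a.
Proof. by move=> sym i; rewrite swap_idx_tperm tpermC -swap_idx_tperm. Qed.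

Definition exch O x y := moves (tperm x y) (x |: O).

Lemma exch_refl O x : exch O x x.
Proof. by rewrite /exch tperm1; apply: moves1. Qed.

(* (x y)(y z) acts as (x z) on O + x. *)
Lemma exch_trans O x y z : x \notin O -> y \notin O -> z \notin O ->
  exch O x y -> exch O y z -> exch O x z.
Proof.
move=> xO yO zO exy eyz.
have : moves (tperm x y * tperm y z)%g (x |: O).
  by apply: moves_comp exy _; rewrite tperm_imsetU1.
apply: moves_eq_in => u /setU1P[->|uO]; rewrite permM; first by rewrite !tpermL.
have [ux uy uz] : [/\ x != u, y != u & z != u].
  by split; apply: contraTneq uO => <-.
by rewrite !tpermD.
Qed.

(* A symmetry of P_{O+x+y} in (x,y) transfers to (x',y) when x, x' are
   exchangeable relative to O + y: (x' x)(x y)(x x') acts as (x' y). *)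
Lemma sym_transport O x x' y : x \notin O -> x' \notin O -> y \notin O ->
  x != y -> x' != y -> exch (y |: O) x x' -> exch (y |: O) x' x ->
  moves (tperm x y) (x |: (y |: O)) -> moves (tperm x' y) (x' |: (y |: O)).
Proof.
move=> xO x'O yO xy x'y exx' ex'x symx.
have xyO : x \notin y |: O by rewrite !inE negb_or xy.
have x'yO : x' \notin y |: O by rewrite !inE negb_or x'y.
have E1 : tperm x' x @: (x' |: (y |: O)) = x |: (y |: O) by rewrite tperm_imsetU1.
have E2 : tperm x y @: (x |: (y |: O)) = x |: (y |: O).
  by rewrite tperm_imset_id // !inE eqxx ?orbT.
have : moves (tperm x' x * tperm x y * tperm x x')%g (x' |: (y |: O)).
  apply: moves_comp; first by apply: moves_comp ex'x _; rewrite E1.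
  by rewrite perm_imsetM E1 E2.
apply: moves_eq_in => u /setU1P[->|/setU1P[->|uO]]; rewrite !permM.
- by rewrite !tpermL tpermD // eq_sym.
- by rewrite (tpermD x'y xy) !tpermR tpermL.
have [ux ux' uy] : [/\ x != u, x' != u & y != u].
  by split; apply: contraTneq uO => <-.
by rewrite !tpermD.
Qed.
End Relabelling.

Section Subtrees.
Variable X : Type.
Implicit Types (p q r : tree X -> Prop) (t u v w : tree X).

Definition subtree v t : Prop := exv (fun w => w = v) t.

Lemma subtree_refl t : subtree t t.
Proof. by case: t => [x|l r]; left. Qed.

Lemma subtree_trans u v t : subtree u v -> subtree v t -> subtree u t.
Proof.
move=> uv; elim: t => [x|l IHl r IHr] /=; first by case=> // vx; rewrite -vx in uv.
case=> [vlr|[/IHl ul|/IHr ur]]; first by rewrite -vlr in uv.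
- by right; left.
- by right; right.
Qed.

Lemma allv_root p t : allv p t -> p t.
Proof. by case: t => [x|l r] []. Qed.

Lemma allv_subtree p v t : allv p t -> subtree v t -> allv p v.
Proof.
elim: t => [x|l IHl r IHr] /= pt; first by case=> // <-.
by case: pt => _ [pl pr] [<- //|[/(IHl pl)|/(IHr pr)]].
Qed.

Lemma allv_intro p t : (forall v, subtree v t -> p v) -> allv p t.
Proof.
elim: t => [x|l IHl r IHr] p_sub /=; first by split=> //; apply: p_sub; left.
split; first by apply: p_sub; left.
by split; [apply: IHl | apply: IHr] => v vt; apply: p_sub; right; [left | right].
Qed.

Lemma allv_lift2 p q r t : (forall v, p v -> q v -> r v) ->
  allv p t -> allv q t -> allv r t.
Proof.
move=> pqr pt qt; apply: allv_intro => v vt.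
by apply: pqr; apply: allv_root; [apply: allv_subtree pt vt | apply: allv_subtree qt vt].
Qed.

Lemma exv_intro p v t : subtree v t -> p v -> exv p t.
Proof.
elim: t => [x|l IHl r IHr] /=; first by case=> // <-; left.
case=> [<-|[/IHl pl|/IHr pr]] pv; first by left.
- by right; left; apply: pl.
- by right; right; apply: pr.
Qed.

Lemma exv_elim p t : exv p t -> exists2 v, subtree v t & p v.
Proof.
elim: t => [x|l IHl r IHr] /=.
  by case=> // px; exists (Leaf x) => //; apply: subtree_refl.
case=> [pt|[/IHl|/IHr] [v vt pv]]; first by exists (Node l r) => //; apply: subtree_refl.
- by exists v => //; right; left.
- by exists v => //; right; right.
Qed.
End Subtrees.

Section Leaves.
Variable X : eqType.
Implicit Types (t v w : tree X) (a b : X).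

Lemma uniq_cat_neq (s1 s2 : seq X) a b : uniq (s1 ++ s2) -> a \in s1 -> b \in s2 -> a != b.
Proof.
rewrite cat_uniq => /and3P[_ disj _] a1 b2; apply: contraNneq disj => eab.
by apply/hasP; exists b => //; rewrite -eab.
Qed.

Lemma subtree_leaves v t : subtree v t -> {subset leaves v <= leaves t}.
Proof.
elim: t => [x|l IHl r IHr] /=; first by case=> // <-.
case=> [<- //|[/IHl|/IHr] sub u /sub]; by rewrite mem_cat => ->; rewrite ?orbT.
Qed.

Lemma subtree_uniq v t : uniq (leaves t) -> subtree v t -> uniq (leaves v).
Proof.
elim: t => [x|l IHl r IHr] /=; first by move=> _ [<-|].
move=> U; move: (U); rewrite cat_uniq => /and3P[ul _ ur].
by case=> [<- //|[/(IHl ul)|/(IHr ur)]].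
Qed.

Lemma split_vertex w a b : a != b -> a \in leaves w -> b \in leaves w ->
  exists l r, subtree (Node l r) w /\
    ((a \in leaves l) && (b \in leaves r) || (b \in leaves l) && (a \in leaves r)).
Proof.
move=> ab; elim: w => [x|l IHl r IHr] /=.
  by rewrite !inE => /eqP ea /eqP eb; move: ab; rewrite ea eb eqxx.
rewrite !mem_cat => /orP[al|ar] /orP[bl|br].
- by have [l' [r' [sub sep]]] := IHl al bl; exists l', r'; split=> //; right; left.
- by exists l, r; split; [left | rewrite al br].
- by exists l, r; split; [left | rewrite ar bl orbT].
- by have [l' [r' [sub sep]]] := IHr ar br; exists l', r'; split=> //; right; right.
Qed.
End Leaves.

Section Restriction.
Variables (X : finType) (Y : {set X}).
Implicit Types (t v w : tree X).

Lemma restrict_leaves t : if restrict Y t is Some t' then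
  leaves t' = [seq x <- leaves t | x \in Y] else [seq x <- leaves t | x \in Y] = [::].
Proof.
elim: t => [x|l IHl r IHr] /=; first by case: (x \in Y).
rewrite filter_cat.
case: (restrict Y l) IHl => [l'|] El; case: (restrict Y r) IHr => [r'|] Er /=;
  by rewrite ?El ?Er ?cats0.
Qed.

Lemma restrict_vertex t t' w' : restrict Y t = Some t' -> subtree w' t' ->
  exists2 w, subtree w t & restrict Y w = Some w'.
Proof.
elim: t t' => [x|l IHl r IHr] t' /=.
  case xY: (x \in Y) => // -[<-] [<-|//].
  by exists (Leaf x); [exact: subtree_refl | rewrite /= xY].
case El: (restrict Y l) => [l'|]; case Er: (restrict Y r) => [r'|] // [<-].
- case=> [<-|[/(IHl _ El)|/(IHr _ Er)] [w sub Ew]].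
  + by exists (Node l r); [exact: subtree_refl | rewrite /= El Er].
  + by exists w => //; right; left.
  + by exists w => //; right; right.
- by move/(IHl _ El) => [w sub Ew]; exists w => //; right; left.
- by move/(IHr _ Er) => [w sub Ew]; exists w => //; right; right.
Qed.

Lemma restrict_subtree v v' t : subtree v t -> restrict Y v = Some v' ->
  exists2 t', restrict Y t = Some t' & subtree v' t'.
Proof.
elim: t => [x|l IHl r IHr] /=.
  by case=> // <- Ev; exists v' => //; apply: subtree_refl.
case=> [<- Ev|[/IHl IH /IH [l' El sub]|/IHr IH /IH [r' Er sub]]].
- by exists v' => //; apply: subtree_refl.
- rewrite El; case: (restrict Y r) => [r'|]; last by exists l'.
  by exists (Node l' r') => //; right; left.
- rewrite Er; case: (restrict Y l) => [l'|]; last by exists r'.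
  by exists (Node l' r') => //; right; right.
Qed.
End Restriction.

Section Clades.
Variable X : finType.
Implicit Types (t v w l r : tree X) (Y D : {set X}) (a b : X).

Lemma mrca_split l r a b : is_mrca (Node l r) a b ->
  (a \in leaves l) && (b \in leaves r) || (b \in leaves l) && (a \in leaves r).
Proof.
rewrite /is_mrca /= !mem_cat => -[/orP[al|ar] [/orP[bl|br] [nl nr]]].
- by move: nl; rewrite al bl.
- by rewrite al br.
- by rewrite ar bl orbT.
- by move: nr; rewrite ar br.
Qed.

Lemma mrca_neq l r a b : is_mrca (Node l r) a b -> a != b.
Proof.
rewrite /is_mrca /= mem_cat => -[alr [_ [nl nr]]]; apply: contraTneq alr => eab.
by move: nl nr; rewrite -eab !andbb => /negbTE-> /negbTE->.
Qed.

Lemma two_clade_split t Y a b : two_clade t Y a b ->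
  exists l r, [/\ subtree (Node l r) t, a \in Y, b \in Y,
    Y :&: desc (Node l r) \subset [set a; b] &
    (a \in leaves l) && (b \in leaves r) || (b \in leaves l) && (a \in leaves r)].
Proof.
case=> ab; case Et: (restrict Y t) => [t'|//] /exv_elim[w' w't' pw'].
have [w wt Ew] := restrict_vertex Et w't'.
have := restrict_leaves Y w; rewrite Ew => lw'.
have memYw u : (u \in Y) && (u \in leaves w) = (u \in [:: a; b]).
  by rewrite -(perm_mem pw') lw' mem_filter.
have /andP[aY aw] : (a \in Y) && (a \in leaves w) by rewrite memYw !inE eqxx.
have /andP[bY bw] : (b \in Y) && (b \in leaves w) by rewrite memYw !inE eqxx orbT.
have [l [r [lrw sep]]] := split_vertex ab aw bw.
exists l, r; split=> //; first exact: subtree_trans lrw wt.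
apply/subsetP => u; rewrite /desc !inE => /andP[uY ulr].
by have := memYw u; rewrite uY (subtree_leaves lrw ulr) !inE.
Qed.

Lemma cherry_two_clade t v c d : uniq (leaves t) -> subtree v t ->
  is_internal v -> is_mrca v c d -> two_clade t (~: desc v :|: [set c; d]) c d.
Proof.
move=> Ut vt vi mrca; set Y := _ :|: _.
have cd : c != d by case: v vt vi mrca {Y} => // l r _ _; apply: mrca_neq.
have [cv [dv _]] := mrca.
have filterY : perm_eq [seq u <- leaves v | u \in Y] [:: c; d].
  apply: uniq_perm; rewrite ?filter_uniq ?(subtree_uniq Ut vt) //= ?inE ?cd //.
  move=> u; rewrite mem_filter /Y /desc !inE.
  case: (boolP (u \in leaves v)) => [_|uv]; rewrite ?andbT ?andbF //.
  by apply/esym/negbTE; apply: contra uv => /orP[]/eqP->.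
split=> //; have := restrict_leaves Y v.
case Ev: (restrict Y v) => [v'|] lv'; last first.
  by move: (perm_mem filterY c); rewrite lv' !inE eqxx.
have [t' Et t'v'] := restrict_subtree vt Ev.
by rewrite Et; apply: exv_intro t'v' _; rewrite lv'.
Qed.

Lemma clade_setE Y D a b : a \in Y -> b \in Y -> Y :&: D \subset [set a; b] ->
  Y = a |: (b |: (Y :\: D)).
Proof.
move=> aY bY YD; apply/setP => u; rewrite !inE.
case: (boolP (u \in D)) => uD /=; last first.
  by case: eqP => [->|_]; [rewrite aY | case: eqP => [->|_]; rewrite ?bY].
rewrite orbF; apply/idP/idP => [uY|/orP[]/eqP-> //].
by have := subsetP YD u; rewrite !inE uY uD => /(_ isT).
Qed.
End Clades.

Section TreeSymmetry.
Variables (R : realFieldType) (X : finType) (k : nat) (P : tensor R X k).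
Implicit Types (v w l r : tree X) (O Y : {set X}) (a b c d x y : X).

Definition split_sym v : Prop :=
  if v is Node l r then exists c d, [/\ c \in leaves l, d \in leaves r &
    sym_in P (~: desc v :|: [set c; d]) c d]
  else True.

Lemma split_sym_of_mrca v a b : (is_internal v -> is_mrca v a b) ->
  (is_internal v -> S_v P v a b) -> split_sym v.
Proof.
case: v => // l r /(_ isT) /mrca_split /orP[] /andP[al br] /(_ isT) S.
  by exists a, b.
by exists b, a; split=> //; rewrite [[set b; a]]setUC; apply: sym_inC.
Qed.

Lemma split_sym_moves w O c d : {in leaves w, forall u, u \notin O} ->
  sym_in P (~: desc w :|: [set c; d]) c d -> moves P (tperm c d) (c |: (d |: O)).
Proof.
move=> outO /sym_inE; rewrite !inE !eqxx !orbT => /(_ isT isT).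
apply: moves_sub; apply/subsetP => u; rewrite /desc !inE.
case/or3P=> [->|->|uO]; rewrite ?orbT //.
by rewrite (contraTN _ uO) // => /outO.
Qed.

Lemma exch_leaves w O x y : uniq (leaves w) -> allv split_sym w ->
  {in leaves w, forall u, u \notin O} -> x \in leaves w -> y \in leaves w ->
  exch P O x y.
Proof.
elim: w x y => [z|l IHl r IHr] x y /=.
  by move=> _ _ _; rewrite !inE => /eqP-> /eqP->; apply: exch_refl.
rewrite cat_uniq => /and3P[Ul _ Ur] [[c [d [cl dr S]]] [Sl Sr]] outO.
have outl : {in leaves l, forall u, u \notin O}.
  by move=> u ul; apply: outO; rewrite mem_cat ul.
have outr : {in leaves r, forall u, u \notin O}.
  by move=> u ur; apply: outO; rewrite mem_cat ur orbT.
have {}IHl := IHl _ _ Ul Sl outl; have {}IHr := IHr _ _ Ur Sr outr.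
have sym_cd := split_sym_moves (w := Node l r) outO S.
have exch_cd : exch P O c d.
  by apply: moves_sub sym_cd; rewrite setUS // subsetUr.
have exch_dc : exch P O d c.
  by rewrite /exch tpermC; apply: moves_sub sym_cd; rewrite setUCA setUS // subsetUr.
have cross u u' : u \in leaves l -> u' \in leaves r ->
    exch P O u u' /\ exch P O u' u.
  move=> ul u'r; have uO := outl u ul; have u'O := outr u' u'r.
  have cO := outl c cl; have dO := outr d dr.
  split.
  - apply: (exch_trans uO cO u'O (IHl u c ul cl)).
    exact: exch_trans cO dO u'O exch_cd (IHr d u' dr u'r).
  - apply: (exch_trans u'O dO uO (IHr u' d u'r dr)).
    exact: exch_trans dO cO uO exch_dc (IHl c u cl ul).
rewrite !mem_cat => /orP[xl|xr] /orP[yl|yr].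
- exact: IHl.
- exact: (cross x y xl yr).1.
- exact: (cross y x yl xr).2.
- exact: IHr.
Qed.

(* The symmetry of a 2-clade {a,b} split at the vertex Node l r: transport
   the symmetry of the chosen pair (c,d) first to (a,d) inside l, then to
   (a,b) inside r. *)
Lemma clade_sym l r Y a b : uniq (leaves (Node l r)) ->
  allv split_sym (Node l r) -> a \in leaves l -> b \in leaves r ->
  a \in Y -> b \in Y -> Y :&: desc (Node l r) \subset [set a; b] -> sym_in P Y a b.
Proof.
set w := Node l r => Uw [[c [d [cl dr S]]] [Sl Sr]] al br aY bY Yw.
have [Ul Ur] : uniq (leaves l) /\ uniq (leaves r).
  by move: Uw; rewrite /= cat_uniq => /and3P[].
have inw u : (u \in leaves l) || (u \in leaves r) -> u \in leaves w.
  by rewrite /= mem_cat.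
set O := Y :\: desc w.
have outO : {in leaves w, forall u, u \notin O} by move=> u uw; rewrite !inE uw.
have [aO bO cO dO] : [/\ a \notin O, b \notin O, c \notin O & d \notin O].
  by split; apply: outO; apply: inw; rewrite ?al ?br ?cl ?dr ?orbT.
have neq u u' : u \in leaves l -> u' \in leaves r -> u != u'.
  by move=> ul u'r; apply: uniq_cat_neq Uw ul u'r.
have ab := neq a b al br; have ad := neq a d al dr; have cd := neq c d cl dr.
have out_l : {in leaves l, forall u, u \notin d |: O}.
  by move=> u ul; rewrite in_setU1 negb_or neq //= outO // inw ?ul.
have out_r : {in leaves r, forall u, u \notin a |: O}.
  by move=> u ur; rewrite in_setU1 negb_or eq_sym neq //= outO // inw ?ur ?orbT.
have sym_ad : moves P (tperm a d) (a |: (d |: O)).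
  apply: (sym_transport cO aO dO cd ad _ _ (split_sym_moves outO S));
    exact: exch_leaves Ul Sl out_l _ _.
have sym_ba : moves P (tperm b a) (b |: (a |: O)).
  have sym_da : moves P (tperm d a) (d |: (a |: O)) by rewrite tpermC setUCA.
  apply: (sym_transport dO bO aO _ _ _ _ sym_da); rewrite 1?eq_sym //;
    exact: exch_leaves Ur Sr out_r _ _.
rewrite (clade_setE aY bY Yw); apply/sym_inE; rewrite ?inE ?eqxx ?orbT //.
by rewrite tpermC setUCA.
Qed.
End TreeSymmetry.

Unset Implicit Arguments.

Theorem lemma4p2 (R : realFieldType) (X : finType) (k : nat) (t : tree X)
  (ch : tree X -> X * X) :
  tree_on t -> (2 <= k)%N ->
  allv (fun v => is_internal v -> is_mrca v (ch v).1 (ch v).2) t ->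
  forall P : tensor R X k,
    allv (fun v => is_internal v -> S_v P v (ch v).1 (ch v).2) t <-> inL t P.
Proof.
move=> [Ut _] _ mrca_ch P; split=> [S_ch Y a b clade | inLP].
- have [l [r [lrt aY bY Ylr sep]]] := two_clade_split clade.
  have Ulr := subtree_uniq Ut lrt.
  have splits : allv (split_sym P) (Node l r).
    apply: allv_subtree lrt; apply: allv_lift2 mrca_ch S_ch => v.
    exact: split_sym_of_mrca.
  case/orP: sep => /andP[al br]; first exact: clade_sym Ulr splits al br aY bY Ylr.
  by apply/sym_inC; apply: clade_sym Ulr splits al br bY aY _; rewrite setUC.
- apply: allv_intro => v vt vi; apply: inLP.
  exact: cherry_two_clade Ut vt vi (allv_root (allv_subtree mrca_ch vt) vi).
Qed.
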